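(* Let $F>1$ and $s>0$ be constants. Consider the self-adjusting $(1,\lambda)$ EA (defined in the context) with update strength $F$ and success rate $s$, using either standard bit mutation with mutation probability $p\in O(1/n)\cap n^{-O(1)}$ or the heavy-tailed mutation operator with a constant $\beta>1$, on an everywhere hard function $f$ with constant $\varepsilon$ (i.e. $p_{\max}=O(n^{-\varepsilon})$) and $d+1=n^{o(\log n)}$ function values, started with an arbitrary search point and arbitrary offspring population size $\lambda_0$. Let $\lambda_2:=n^{\varepsilon/2}$ and let $\tau$ be the first generation where $\lambda_\tau\ge\lambda_2$. Then $E[\tau]=O(\log\lambda_2)$, and during these $\tau$ generations the algorithm makes only $\lambda_0+O(\lambda_2\log\lambda_2)$ function evaluations in expectation.
   Context: Search space $\{0,1\}^n$; asymptotics with respect to $n\to\infty$. W.l.o.g. $f$ takes values in $\{0,\dots,d\}$ with global optima at value $d$. Self-adjusting $(1,\lambda)$ EA: maintains a search point $x$ and real-valued $\lambda$ (rounded to a nearest integer when needed); $\lambda_t$ is the value in generation $t$. Each generation creates $\lambda$ offspring independently by mutating $x$ (one evaluation each), picks an offspring $y$ of maximum fitness (ties uniformly at random), sets $x\leftarrow y$ in any case, and sets $\lambda\leftarrow\max\{1,\lambda/F\}$ if $f(y)>f(x)$ and $\lambda\leftarrow F^{1/s}\lambda$ otherwise. Standard bit mutation with probability $p$ flips each bit independently with probability $p$. Heavy-tailed mutation with $\beta>1$ draws $\chi\in\{1,\dots,n/2\}$ with $\Pr[\chi=i]=i^{-\beta}/\sum_{j=1}^{n/2}j^{-\beta}$ and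 then does standard bit mutation with probability $\chi/n$. $p_x^+$ is the probability that a single offspring of $x$ has strictly larger fitness than $x$; $p_{\max}:=\max\{p_x^+ : f(x)<d\}$. $f$ is everywhere hard if $p_{\max}=O(n^{-\varepsilon})$ for some constant $0<\varepsilon<1$. *)

From mathcomp Require Import all_boot all_order all_algebra.
From mathcomp Require Import reals exp.
Set Implicit Arguments. Unset Strict Implicit. Unset Printing Implicit Defensive.
Import Order.TTheory GRing.Theory Num.Theory.
Local Open Scope ring_scope.

Definition bitstring (n : nat) := {ffun 'I_n -> bool}.

Definition hamming n (x y : bitstring n) : nat := #|[set i | x i != y i]|.

Section EA.
Variable R : realType.

(* A mutation operator on {0,1}^n is given by its transition probabilities:
   mut x y = Pr[mutating x yields y]. *)
Definition mutation n := bitstring n -> bitstring n -> R.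

Definition sbm n (p : R) : mutation n :=
  fun x y => p ^+ hamming x y * (1 - p) ^+ (n - hamming x y).

Definition heavy_norm n (beta : R) : R :=
  \sum_(1 <= j < (n./2).+1) powR j%:R (- beta).
Definition heavy n (beta : R) : mutation n :=
  fun x y => \sum_(1 <= i < (n./2).+1)
     (powR i%:R (- beta) / heavy_norm n beta) * sbm (i%:R / n%:R) x y.

Definition p_plus n (mut : mutation n) (f : bitstring n -> nat) (x : bitstring n) : R :=
  \sum_(y | (f x < f y)%N) mut x y.

(* p_max := max { p_x^+ : f(x) < d }  (0 if there is no such x). *)
Definition p_max n (mut : mutation n) (f : bitstring n -> nat) (d : nat) : R :=
  \big[Num.max/0]_(x | (f x < d)%N) p_plus mut f x.

Definition round_lam (lam : R) : nat := Num.trunc (lam + 1 / 2).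

(* Probability that one generation of the (1,lambda) EA with k offspring,
   started at x, selects z as the new search point: the k offspring are
   i.i.d. according to mut x, and the selected offspring is uniform among the
   offspring of maximal fitness. *)
Definition select n (mut : mutation n) (f : bitstring n -> nat) (k : nat)
    (x z : bitstring n) : R :=
  \sum_(ys : {ffun 'I_k -> bitstring n})
     (\prod_(i < k) mut x (ys i)) *
     (if f z == \max_(i < k) f (ys i)
      then #|[set i | ys i == z]|%:R / #|[set i | f (ys i) == \max_(j < k) f (ys j)]|%:R
      else 0).

Definition lam_update (F s : R) (fx fz : nat) (lam : R) : R :=
  if (fx < fz)%N then Num.max 1 (lam / F) else powR F (1 / s) * lam.

(* Truncated expected accumulated cost.  exp_cost ... g lam2 T x lam is
   E[ sum_{t < min(tau, T)} g(lambda_t) ] for the self-adjusting (1,lambda) EA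
   started in search point x with lambda_0 = lam, where
   tau = min { t | lambda_t >= lam2 }.  By monotone convergence,
   E[ sum_{t < tau} g(lambda_t) ] = sup_T exp_cost ... T x lam. *)
Fixpoint exp_cost n (mut : mutation n) (f : bitstring n -> nat) (F s : R)
    (g : R -> R) (lam2 : R) (T : nat) (x : bitstring n) (lam : R) : R :=
  match T with
  | 0 => 0
  | T'.+1 =>
    if lam2 <= lam then 0
    else g lam + \sum_(z : bitstring n)
           select mut f (round_lam lam) x z *
           exp_cost mut f F s g lam2 T' z (lam_update F s (f x) (f z) lam)
  end.

End EA.

(* While lambda < lambda_2, a generation creates round(lambda) <= 2 lambda_2 offspring, so
   by the union bound it improves the fitness with probability at most
   2 lambda_2 p_max = O(n^(-eps/2)), below any positive constant for large n.  With
   c = ln F / s, the potential (2/c) max(0, ln lambda_2 - ln lambda + c) drops by exactly 2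
   in a generation without improvement and rises by at most (2/c) ln F in one with
   improvement, so once improvements are rare enough it drops by at least 1 in expectation.
   Additive drift, here an induction on the truncation horizon of [exp_cost], bounds the
   expected number of generations by the initial potential, O(log lambda_2); each of them
   costs at most 2 lambda_2 evaluations. *)

From mathcomp Require Import all_boot all_order all_algebra.
From mathcomp Require Import reals exp.
From mathcomp Require Import ring lra.
From mathcomp Require sequences.
Import Order.TTheory GRing.Theory Num.Theory.
Set Implicit Arguments. Unset Strict Implicit. Unset Printing Implicit Defensive.
Local Open Scope ring_scope.

Section TieBreak.
Variables (R : realType) (n : nat) (f : bitstring n -> nat).

Definition tie_break k (ys : {ffun 'I_k -> bitstring n}) (z : bitstring n) : R :=
  if f z == \max_(i < k) f (ys i)
  then #|[set i | ys i == z]|%:R / #|[set i | f (ys i) == \max_(j < k) f (ys j)]|%:R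
  else 0.

Lemma sum_card_fibres k (ys : {ffun 'I_k -> bitstring n}) (Q : pred (bitstring n)) :
  (\sum_(z | Q z) #|[set i | ys i == z]| = #|[set i | Q (ys i)]|)%N.
Proof.
rewrite -sum1_card (partition_big ys Q) /=; last by move=> i; rewrite inE.
apply: eq_bigr => z Qz; rewrite -sum1_card; apply: eq_bigl => i.
by rewrite !inE; case: (ys i =P z) => [->|_]; rewrite ?Qz ?andbF.
Qed.

Lemma sum_tie_break k (ys : {ffun 'I_k -> bitstring n}) (P : pred (bitstring n)) :
  \sum_(z | P z) tie_break ys z =
  #|[set i | P (ys i) && (f (ys i) == \max_(j < k) f (ys j))]|%:R /
  #|[set i | f (ys i) == \max_(j < k) f (ys j)]|%:R.
Proof.
rewrite /tie_break -big_mkcondr /= -mulr_suml -natr_sum.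
by rewrite (sum_card_fibres ys (fun z => P z && (f z == \max_(j < k) f (ys j)))).
Qed.

Lemma tie_break_ge0 k (ys : {ffun 'I_k -> bitstring n}) z : 0 <= tie_break ys z.
Proof. by rewrite /tie_break; case: ifP => // _; rewrite divr_ge0. Qed.

Lemma sum_tie_break_le1 k (ys : {ffun 'I_k -> bitstring n}) (P : pred (bitstring n)) :
  \sum_(z | P z) tie_break ys z <= 1.
Proof.
rewrite sum_tie_break; set a := #|_|; set b := #|_|.
have le_ab : (a <= b)%N.
  by apply: subset_leq_card; apply/subsetP => i; rewrite !inE => /andP[].
have [->|b0] := eqVneq b 0%N; first by rewrite invr0 mulr0.
by rewrite ler_pdivrMr ?ltr0n ?lt0n // mul1r ler_nat.
Qed.

Lemma sum_tie_break_le_card k (ys : {ffun 'I_k -> bitstring n}) (P : pred (bitstring n)) :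
  \sum_(z | P z) tie_break ys z <= #|[set i | P (ys i)]|%:R.
Proof.
rewrite sum_tie_break; set a := #|_|; set b := #|_|.
have le_ac : (a <= #|[set i | P (ys i)]|)%N.
  by apply: subset_leq_card; apply/subsetP => i; rewrite !inE => /andP[].
have [->|b0] := eqVneq b 0%N; first by rewrite invr0 mulr0.
apply: le_trans (_ : a%:R <= _); last by rewrite ler_nat.
by rewrite ler_pdivrMr ?ltr0n ?lt0n // ler_peMr ?ler0n // ler1n lt0n.
Qed.

End TieBreak.
Arguments tie_break {R n} f {k} ys z.

Section Selection.
Variables (R : realType) (n : nat) (mut : mutation R n) (f : bitstring n -> nat).
Hypothesis mut_ge0 : forall x y, 0 <= mut x y.
Hypothesis mut_mass : forall x, \sum_y mut x y <= 1.

Lemma sum_select k x (P : pred (bitstring n)) :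
  \sum_(z | P z) select mut f k x z =
  \sum_(ys : {ffun 'I_k -> bitstring n})
     (\prod_(i < k) mut x (ys i)) * \sum_(z | P z) tie_break f ys z.
Proof. by rewrite /select exchange_big; apply: eq_bigr => ys _; rewrite mulr_sumr. Qed.

Lemma offspring_ge0 k x (ys : {ffun 'I_k -> bitstring n}) :
  0 <= \prod_(i < k) mut x (ys i).
Proof. exact: prodr_ge0. Qed.

Lemma offspring_mass k x :
  \sum_(ys : {ffun 'I_k -> bitstring n}) \prod_(i < k) mut x (ys i) <= 1.
Proof.
rewrite -(bigA_distr_bigA (fun (i : 'I_k) y => mut x y)) /=.
by apply: prodr_ile1 => i _; rewrite mut_mass andbT sumr_ge0.
Qed.

(* The sum of products factorizes offspring by offspring; every factor except the
   j-th is a total mass <= 1. *)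
Lemma offspring_marginal k x (P : pred (bitstring n)) (j : 'I_k) :
  \sum_(ys : {ffun 'I_k -> bitstring n}) (\prod_(i < k) mut x (ys i)) * (P (ys j))%:R
  <= \sum_(y | P y) mut x y.
Proof.
pose G (i : 'I_k) y := mut x y * (if i == j then (P y)%:R else 1).
have -> : \sum_(ys : {ffun 'I_k -> bitstring n})
             (\prod_(i < k) mut x (ys i)) * (P (ys j))%:R
          = \sum_(ys : {ffun 'I_k -> bitstring n}) \prod_(i < k) G i (ys i).
  apply: eq_bigr => ys _; rewrite /G big_split /=; congr (_ * _).
  by rewrite (bigD1 j) //= eqxx big1 ?mulr1 // => i /negbTE ->.
rewrite -(bigA_distr_bigA G) (bigD1 j) //=.
have -> : \sum_y G j y = \sum_(y | P y) mut x y.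
  rewrite /G eqxx [RHS]big_mkcond; apply: eq_bigr => y _.
  by case: (P y); rewrite ?mulr1 ?mulr0.
rewrite -[leRHS]mulr1 ler_wpM2l ?sumr_ge0 //.
apply: prodr_ile1 => i /negbTE ij.
have -> : \sum_y G i y = \sum_y mut x y by apply: eq_bigr => y _; rewrite /G ij mulr1.
by rewrite mut_mass andbT sumr_ge0.
Qed.

Lemma select_ge0 k x z : 0 <= select mut f k x z.
Proof. by apply: sumr_ge0 => ys _; rewrite mulr_ge0 ?offspring_ge0 ?tie_break_ge0. Qed.

Lemma sum_select_le1 k x : \sum_z select mut f k x z <= 1.
Proof.
rewrite sum_select; apply: le_trans (offspring_mass k x).
apply: ler_sum => ys _; rewrite -[leRHS]mulr1 ler_wpM2l ?offspring_ge0 //.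
exact: sum_tie_break_le1.
Qed.

(* Union bound over the k offspring. *)
Lemma sum_select_le k x (P : pred (bitstring n)) :
  \sum_(z | P z) select mut f k x z <= k%:R * \sum_(y | P y) mut x y.
Proof.
have card_sum (ys : {ffun 'I_k -> bitstring n}) :
    #|[set i | P (ys i)]|%:R = \sum_(i < k) (P (ys i))%:R :> R.
  by rewrite -sum1_card natr_sum big_mkcond; apply: eq_bigr => i _; rewrite inE; case: (P _).
rewrite sum_select.
apply: le_trans (_ : \sum_(ys : {ffun 'I_k -> bitstring n})
   \sum_(j < k) (\prod_(i < k) mut x (ys i)) * (P (ys j))%:R <= _).
  apply: ler_sum => ys _; rewrite -mulr_sumr -card_sum ler_wpM2l ?offspring_ge0 //.
  exact: sum_tie_break_le_card.
have -> : k%:R * \sum_(y | P y) mut x y = \sum_(j < k) \sum_(y | P y) mut x y.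
  by rewrite sumr_const card_ord mulr_natl.
rewrite exchange_big; apply: ler_sum => j _; exact: offspring_marginal.
Qed.

End Selection.

Section MutationOperators.
Variables (R : realType) (n : nat).

Lemma sbm_prod (p : R) (x y : bitstring n) :
  sbm p x y = \prod_(i < n) (if x i != y i then p else 1 - p).
Proof.
rewrite /sbm /hamming (bigID (fun i => x i != y i)) /=.
rewrite (eq_bigr (fun=> p)); last by move=> i ->.
rewrite [X in _ = _ * X](eq_bigr (fun=> 1 - p)); last by move=> i /negbTE ->.
rewrite !prodr_const; congr (_ ^+ _ * _ ^+ _); first by apply: eq_card => i; rewrite inE.
have := cardC [set i | x i != y i]; rewrite card_ord => {1}<-; rewrite addKn.
by apply: eq_card => i; rewrite !inE.
Qed.

Lemma sbm_mass (p : R) (x : bitstring n) : \sum_y sbm p x y = 1.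
Proof.
under eq_bigr do rewrite sbm_prod.
rewrite -(bigA_distr_bigA (fun i b => if x i != b then p else 1 - p)) /=.
by apply: big1 => i _; rewrite big_bool; case: (x i) => /=; ring.
Qed.

Lemma sbm_ge0 (p : R) (x y : bitstring n) : 0 <= p <= 1 -> 0 <= sbm p x y.
Proof. by case/andP => p0 p1; rewrite mulr_ge0 ?exprn_ge0 ?subr_ge0. Qed.

Lemma heavy_mass (beta : R) (x : bitstring n) : \sum_y heavy beta x y <= 1.
Proof.
rewrite /heavy exchange_big /=.
under eq_bigr do rewrite -mulr_sumr sbm_mass mulr1.
rewrite -mulr_suml -/(heavy_norm n beta).
by have [->|h0] := eqVneq (heavy_norm n beta) 0; rewrite ?mul0r ?divff.
Qed.

Lemma heavy_ge0 (beta : R) (x y : bitstring n) : 0 <= heavy beta x y.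
Proof.
rewrite /heavy big_nat; apply: sumr_ge0 => i /andP[i_gt0 i_le].
have i_le_n : (i <= n)%N.
  by apply: leq_trans (ltnSE i_le) _; rewrite leq_half_double -addnn leqW // leq_addr.
have n_gt0 : (0 < n)%N := leq_trans i_gt0 i_le_n.
rewrite mulr_ge0 ?divr_ge0 ?powR_ge0 ?sumr_ge0 // => [j _|]; first exact: powR_ge0.
by rewrite sbm_ge0 // divr_ge0 //= ler_pdivrMr ?ltr0n // mul1r ler_nat.
Qed.

End MutationOperators.

Lemma round_lam_le (R : realType) (lam L : R) :
  lam <= L -> 1 <= L -> (round_lam lam)%:R <= 2 * L.
Proof.
move=> lam_leL L_ge1.
apply: le_trans (_ : (Num.truncn (L + 1 / 2))%:R <= _).
  by rewrite ler_nat le_truncn // lerD2r.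
have : (Num.truncn (L + 1 / 2))%:R <= L + 1 / 2 by rewrite truncn_le; lra.
lra.
Qed.

Section Drift.
Variables (R : realType) (F s L : R).
Hypotheses (F_gt1 : 1 < F) (s_gt0 : 0 < s).

(* The increase ln (F ^ (1/s)) of ln lambda in a generation without improvement. *)
Definition ln_growth : R := ln F / s.

Definition potential (lam : R) : R :=
  2 / ln_growth * Num.max 0 (ln L - ln lam + ln_growth).

Definition success_threshold : R := (2 + 2 / ln_growth * ln F)^-1.

Definition steps_factor : R := 2 / ln_growth * (1 + ln_growth).

Lemma ln_growth_gt0 : 0 < ln_growth.
Proof. by rewrite divr_gt0 // ln_gt0. Qed.

Lemma success_threshold_gt0 : 0 < success_threshold.
Proof. by rewrite invr_gt0 addr_gt0 // mulr_gt0 ?divr_gt0 ?ln_growth_gt0 ?ln_gt0. Qed.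

Lemma steps_factor_gt0 : 0 < steps_factor.
Proof.
have c_gt0 := ln_growth_gt0.
by apply: mulr_gt0; [exact: divr_gt0 | exact: addr_gt0].
Qed.

Lemma potential_ge0 lam : 0 <= potential lam.
Proof. by rewrite mulr_ge0 ?le_max ?lexx // divr_ge0 // ltW // ln_growth_gt0. Qed.

Lemma potential_le_ln lam : 1 <= lam -> 1 <= ln L ->
  potential lam <= steps_factor * ln L.
Proof.
move=> lam_ge1 lnL_ge1; have c_gt0 := ln_growth_gt0; have lnlam_ge0 := ln_ge0 lam_ge1.
have c_le : ln_growth <= ln_growth * ln L by rewrite ler_peMr // ltW.
rewrite /potential /steps_factor -[leRHS]mulrA.
apply: ler_wpM2l; first by rewrite divr_ge0 ?ltW.
rewrite ge_max; apply/andP; split.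
  by rewrite mulr_ge0 ?addr_ge0 ?ltW //; lra.
lra.
Qed.

Lemma potential_failure lam : 0 < lam <= L ->
  potential (powR F (1 / s) * lam) = potential lam - 2.
Proof.
case/andP => lam_gt0 lam_leL; have c_gt0 := ln_growth_gt0.
have F_gt0 : 0 < F := lt_trans ltr01 F_gt1.
have u_ge0 : 0 <= ln L - ln lam.
  by rewrite subr_ge0 ler_ln ?posrE // (lt_le_trans lam_gt0).
rewrite /potential lnM ?posrE ?powR_gt0 // ln_powR.
have -> : ln L - (1 / s * ln F + ln lam) + ln_growth = ln L - ln lam.
  by rewrite /ln_growth; field; rewrite gt_eqF.
rewrite max_r // max_r; last by rewrite addr_ge0 // ltW.
by field; rewrite gt_eqF.
Qed.

Lemma potential_success lam : 0 < lam ->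
  potential (Num.max 1 (lam / F)) <= potential lam + 2 / ln_growth * ln F.
Proof.
move=> lam_gt0; have c_gt0 := ln_growth_gt0; have lnF_gt0 : 0 < ln F := ln_gt0 F_gt1.
have F_gt0 : 0 < F := lt_trans ltr01 F_gt1.
have ln_max : ln lam - ln F <= ln (Num.max 1 (lam / F)).
  rewrite -ln_div ?posrE // ler_ln ?posrE ?divr_gt0 ?le_max ?lexx ?orbT //.
  by rewrite (lt_le_trans ltr01) // le_max lexx.
rewrite /potential -mulrDr; apply: ler_wpM2l; first by rewrite divr_ge0 ?ltW.
rewrite ge_max; apply/andP; split.
  by apply: addr_ge0; [rewrite le_max lexx | exact: ltW].
apply: le_trans (_ : ln L - ln lam + ln_growth + ln F <= _); first lra.
by rewrite lerD2r le_max lexx orbT.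
Qed.

Lemma potential_update a b lam : 0 < lam <= L ->
  potential (lam_update F s a b lam)
  <= potential lam - 2 + (a < b)%N%:R / success_threshold.
Proof.
move=> lamP; rewrite /lam_update /success_threshold invrK; case: ltnP => _.
  by rewrite mul1r; have := potential_success (andP lamP).1; lra.
by rewrite potential_failure // mul0r addr0.
Qed.

Lemma lam_update_ge1 a b lam : 1 <= lam -> 1 <= lam_update F s a b lam.
Proof.
move=> lam_ge1; rewrite /lam_update; case: ifP => _; first by rewrite le_max lexx.
have F_growth_ge1 : 1 <= powR F (1 / s).
  by rewrite -{1}(powRr0 F); apply: ler_powR; rewrite ?divr_ge0 ?ltW.
by rewrite (le_trans lam_ge1) // ler_peMl // (le_trans ler01).
Qed.

Variables (n : nat) (mut : mutation R n) (f : bitstring n -> nat).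
Hypothesis mut_ge0 : forall x y, 0 <= mut x y.
Hypothesis mut_mass : forall x, \sum_y mut x y <= 1.

Lemma potential_drift k x lam : 0 < lam < L ->
  \sum_(z | (f x < f z)%N) select mut f k x z <= success_threshold ->
  \sum_z select mut f k x z * potential (lam_update F s (f x) (f z) lam)
  <= potential lam - 1.
Proof.
case/andP => lam_gt0 lam_ltL improve_le.
have lamP : 0 < lam <= L by rewrite lam_gt0 ltW.
have pot_ge2 : 0 <= potential lam - 2.
  by rewrite -potential_failure // potential_ge0.
set q := \sum_(z | (f x < f z)%N) select mut f k x z in improve_le *.
have mass_le1 := sum_select_le1 f mut_ge0 mut_mass k x.
have jump_le1 : success_threshold^-1 * q <= 1.
  by rewrite ler_pdivrMl ?success_threshold_gt0 // mulr1.
apply: le_trans (_ : (potential lam - 2) * \sum_z select mut f k x z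
                     + success_threshold^-1 * q <= _); last first.
  by have := ler_wpM2l pot_ge2 mass_le1; lra.
rewrite /q mulr_sumr mulr_sumr [X in _ <= _ + X]big_mkcond -big_split.
apply: ler_sum => z _.
apply: le_trans (ler_wpM2l (select_ge0 f mut_ge0 k x z) (potential_update _ _ lamP)) _.
by case: ltnP => _ /=; rewrite ?mulr1n ?mulr0n; lra.
Qed.

Hypothesis L_ge1 : 1 <= L.
Hypothesis improvement_rare : forall x, 2 * L * p_plus mut f x <= success_threshold.

Lemma exp_steps_le_potential T x lam : 1 <= lam ->
  exp_cost mut f F s (fun=> 1) L T x lam <= potential lam.
Proof.
elim: T x lam => [|T IH] x lam lam_ge1 /=; first exact: potential_ge0.
case: (leP L lam) => [_|lam_ltL]; first exact: potential_ge0.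
have lam_in : 0 < lam < L by rewrite (lt_le_trans ltr01 lam_ge1) lam_ltL.
have improve_le :
    \sum_(z | (f x < f z)%N) select mut f (round_lam lam) x z <= success_threshold.
  apply: le_trans _ (improvement_rare x).
  apply: le_trans (sum_select_le f mut_ge0 mut_mass _ x _) _.
  by apply: ler_wpM2r; [exact: sumr_ge0 | exact: round_lam_le (ltW lam_ltL) L_ge1].
have drift := potential_drift lam_in improve_le.
apply: le_trans (_ : 1 + \sum_z select mut f (round_lam lam) x z *
    potential (lam_update F s (f x) (f z) lam) <= _); last by lra.
by rewrite lerD2l; apply: ler_sum => z _; rewrite ler_wpM2l ?select_ge0 ?IH ?lam_update_ge1.
Qed.

End Drift.

Lemma exp_cost_le_mul_steps (R : realType) n (mut : mutation R n) (f : bitstring n -> nat)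
    (F s L M : R) (g : R -> R) :
  (forall x y, 0 <= mut x y) -> 0 <= M -> (forall lam, lam < L -> g lam <= M) ->
  forall T x lam,
  exp_cost mut f F s g L T x lam <= M * exp_cost mut f F s (fun=> 1) L T x lam.
Proof.
move=> mut_ge0 M_ge0 g_le T; elim: T => [|T IH] x lam /=; first by rewrite mulr0.
case: (leP L lam) => [_|lam_ltL]; first by rewrite mulr0.
rewrite mulrDr mulr1 mulr_sumr lerD ?g_le //.
apply: ler_sum => z _; rewrite mulrCA.
by apply: ler_wpM2l; [exact: select_ge0 | exact: IH].
Qed.

Lemma p_plus_le_p_max (R : realType) n (mut : mutation R n) f d x :
  (forall y, (f y <= d)%N) -> p_plus mut f x <= p_max mut f d.
Proof.
move=> f_le_d; have [fx_lt_d|d_le_fx] := ltnP (f x) d.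
  by rewrite /p_max (bigD1 x) //= le_max lexx.
rewrite /p_plus big_pred0; last first.
  by move=> y; apply/negbTE; rewrite -leqNgt (leq_trans (f_le_d y)).
by rewrite /p_max; elim/big_rec: _ => // y v _ v_ge0; rewrite le_max v_ge0 orbT.
Qed.

Lemma everywhere_hard_p_plus_le (R : realType) n (mut : mutation R n) f d
    (C eps th : R) x :
  (forall y, (f y <= d)%N) -> p_max mut f d <= C * powR n%:R (- eps) ->
  0 < eps -> 0 < th -> 1 <= powR n%:R (eps / 2) -> 2 * C / th <= powR n%:R (eps / 2) ->
  2 * powR n%:R (eps / 2) * p_plus mut f x <= th.
Proof.
set L := powR n%:R (eps / 2) => f_le_d p_max_le eps_gt0 th_gt0 L_ge1 C_le_L.
have L_gt0 : 0 < L := lt_le_trans ltr01 L_ge1.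
have powR_neg : powR n%:R (- eps) = (L * L)^-1.
  rewrite /L -powRD; last by rewrite gt_eqF ?addr_gt0 ?divr_gt0.
  by rewrite -powRN; congr powR; lra.
apply: le_trans (_ : 2 * L * (C * (L * L)^-1) <= _).
  rewrite -powR_neg; apply: ler_wpM2l; first by rewrite mulr_ge0 ?ltW.
  exact: le_trans (p_plus_le_p_max _ _ f_le_d) p_max_le.
have -> : 2 * L * (C * (L * L)^-1) = 2 * C / L by field; rewrite gt_eqF.
by rewrite ler_pdivrMr // [th * L]mulrC -ler_pdivrMr.
Qed.

Lemma powR_nat_large (R : realType) (M a : R) : 0 < a ->
  exists N, forall n, (N <= n)%N -> M <= powR n%:R a.
Proof.
move=> a_gt0; pose M' := Num.max M 1.
have M'_ge0 : 0 <= M' by rewrite le_max ler01 orbT.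
exists (Num.truncn (powR M' a^-1)).+1 => n le_Nn.
have le_n : powR M' a^-1 <= n%:R.
  by apply: le_trans (ltW (truncnS_gt _)) _; rewrite ler_nat.
apply: le_trans (_ : M' <= _); first by rewrite le_max lexx.
rewrite -[leLHS](powRr1 M'_ge0) -[in leLHS](mulVf (lt0r_neq0 a_gt0)) powRrM.
by apply: ge0_ler_powR; rewrite ?nnegrE ?powR_ge0 ?ler0n ?(ltW a_gt0).
Qed.

Theorem lemma3p2 (R : realType) (F s eps : R)
    (mut : forall n : nat, mutation R n)
    (d : nat -> nat) (f : forall n : nat, bitstring n -> nat) :
  1 < F -> 0 < s -> 0 < eps < 1 ->
  (* mutation operator: standard bit mutation with p in O(1/n) cap n^{-O(1)},
     or heavy-tailed mutation with constant beta > 1 *)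
  ((exists p : nat -> R,
      (forall n, 0 <= p n <= 1) /\
      (exists c : R, exists n0 : nat, forall n, (n0 <= n)%N -> p n <= c / n%:R) /\
      (exists k : R, exists n0 : nat, forall n, (n0 <= n)%N -> powR n%:R (- k) <= p n) /\
      (forall n x y, mut n x y = sbm (p n) x y))
   \/
   (exists beta : R, 1 < beta /\ forall n x y, mut n x y = heavy beta x y)) ->
  (* f takes values in {0,...,d}, global optima at value d *)
  (forall n x, (f n x <= d n)%N) ->
  (forall n, exists x, f n x = d n) ->
  (* f is everywhere hard with constant eps: p_max = O(n^-eps) *)
  (exists C : R, exists n0 : nat, forall n, (n0 <= n)%N ->
      p_max (mut n) (f n) (d n) <= C * powR n%:R (- eps)) ->
  (* d + 1 = n^{o(log n)} *)
  (forall delta : R, 0 < delta -> exists n0 : nat, forall n, (n0 <= n)%N ->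
      (d n).+1%:R <= powR n%:R (delta * ln n%:R)) ->
  (* conclusion, with lambda_2 = n^{eps/2}, uniformly in x0 and lambda_0 *)
  exists C : R, exists n0 : nat, 0 < C /\
    forall n, (n0 <= n)%N ->
    forall (x0 : bitstring n) (lam0 : R), 1 <= lam0 ->
    forall T : nat,
      exp_cost (mut n) (f n) F s (fun _ => 1) (powR n%:R (eps / 2)) T x0 lam0
        <= C * ln (powR n%:R (eps / 2))
      /\
      exp_cost (mut n) (f n) F s (fun lam => (round_lam lam)%:R)
               (powR n%:R (eps / 2)) T x0 lam0
        <= lam0 + C * powR n%:R (eps / 2) * ln (powR n%:R (eps / 2)).
Proof.
move=> F_gt1 s_gt0 /andP[eps_gt0 _] mutE f_le_d _ [C0 [n1 p_maxE]] _.
have [mut_ge0 mut_mass] :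
    (forall n x y, 0 <= mut n x y) /\ (forall n x, \sum_y mut n x y <= 1).
  case: mutE => [[p [p01 [_ [_ mutE]]]] | [beta [_ mutE]]]; split=> n x *.
  - by rewrite mutE sbm_ge0.
  - by under eq_bigr do rewrite mutE; rewrite sbm_mass.
  - by rewrite mutE heavy_ge0.
  - by under eq_bigr do rewrite mutE; exact: heavy_mass.
have th_gt0 := success_threshold_gt0 F_gt1 s_gt0.
have K_gt0 := steps_factor_gt0 F_gt1 s_gt0.
set K := steps_factor F s in K_gt0 *.
have [N L_large] := powR_nat_large
  (Num.max (sequences.expR 1) (2 * C0 / success_threshold F s))
  (divr_gt0 eps_gt0 (ltr0Sn R 1)).
exists (2 * K), (maxn N n1); split; first by rewrite mulr_gt0.
move=> n; rewrite geq_max => /andP[le_Nn le_n1n] x0 lam0 lam0_ge1 T.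
have := L_large n le_Nn; set L := powR n%:R (eps / 2).
rewrite ge_max => /andP[e_le_L C0_le_L].
have L_ge1 : 1 <= L by rewrite (le_trans _ e_le_L) // ltW // expR_gt1.
have lnL_ge1 : 1 <= ln L.
  by rewrite -[leLHS](expRK 1) ler_ln ?posrE ?expR_gt0 ?(lt_le_trans ltr01).
have rare x := everywhere_hard_p_plus_le x (f_le_d n) (p_maxE n le_n1n)
  eps_gt0 th_gt0 L_ge1 C0_le_L.
have steps : exp_cost (mut n) (f n) F s (fun=> 1) L T x0 lam0 <= K * ln L.
  apply: le_trans (exp_steps_le_potential F_gt1 s_gt0 (mut_ge0 n) (mut_mass n)
    L_ge1 rare T x0 lam0_ge1) _.
  exact: potential_le_ln.
have KlnL_ge0 : 0 <= K * ln L by rewrite mulr_ge0 ?ltW //; lra.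
have twoL_ge0 : 0 <= 2 * L by lra.
split; first lra.
apply: le_trans (exp_cost_le_mul_steps _ _ _ (mut_ge0 n) twoL_ge0
  (fun lam lam_ltL => round_lam_le (ltW lam_ltL) L_ge1) T x0 lam0) _.
have := ler_wpM2l twoL_ge0 steps; lra.
Qed.
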